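(* Let $\Delta$ be a $\Gamma_{m,n}$-semimodule and $x\in\mathbb{Z}$. Then: (1) the number of $m$-generators of $\Delta$ in $[x,x+n)$ equals $g(x-m)-g(x)$; (2) the number of $m$-cogenerators of $\Delta$ in $[x,x+n)$ equals $g(x)-g(x+m)$; (3) the number of $m$-generators of $\Delta$ in $[x,x+n)$ equals the number of $n$-cogenerators of $\Delta$ in $[x-m,x)$.
   Context: Let $m,n$ be coprime positive integers and $\Gamma_{m,n}=\{am+bn:a,b\in\mathbb{Z}_{\ge0}\}$. A $\Gamma_{m,n}$-semimodule is a subset $\Delta\subset\mathbb{Z}_{\ge0}$ with $\Delta+\Gamma_{m,n}\subset\Delta$. For $p\in\{m,n\}$, a $p$-generator of $\Delta$ is an integer $a\in\Delta$ with $a-p\notin\Delta$, and a $p$-cogenerator is an integer $b\notin\Delta$ with $b+p\in\Delta$. For $y\in\mathbb{Z}$, $g(y)=\#\big(([y,y+n)\cap\mathbb{Z})\setminus\Delta\big)$. Intervals denote sets of integers. *)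

From mathcomp Require Import all_boot all_order all_algebra.
Set Implicit Arguments. Unset Strict Implicit. Unset Printing Implicit Defensive.
Import Order.TTheory GRing.Theory Num.Theory.
Local Open Scope ring_scope.

Definition in_Gamma (m n : nat) (c : int) : Prop :=
  exists a b : nat, c = (a * m + b * n)%N%:Z.

Definition semimodule (m n : nat) (D : pred int) : Prop :=
  (forall a, D a -> 0 <= a) /\
  (forall a c, D a -> in_Gamma m n c -> D (a + c)).

Definition is_gen (D : pred int) (p : nat) (a : int) : bool :=
  D a && ~~ D (a - p%:Z).

Definition is_cogen (D : pred int) (p : nat) (b : int) : bool :=
  ~~ D b && D (b + p%:Z).

Definition count_in (P : pred int) (lo : int) (len : nat) : nat :=
  count (fun k : nat => P (lo + k%:Z)) (iota 0 len).

Definition gfun (n : nat) (D : pred int) (y : int) : nat :=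
  count_in (fun z => ~~ D z) y n.

(* Closure of Delta under + p makes the indicator of Delta monotone along
   every p-progression, so the p-cogenerators in a window are exactly what
   the Delta-count gains when the window is shifted by p; p-generators are
   p-cogenerators shifted by p.  Parts (1) and (2) are this identity for
   p = m with g(y) = n - #(Delta in [y, y + n)).  For (3), count Delta in
   [x - m, x + n) once as [x - m, x) followed by [x, x + n) and once as
   [x - m, x - m + n) followed by [x - m + n, x + n): comparing the two
   splittings equates the gain of the m-shift of a length-n window with the
   gain of the n-shift of a length-m window. *)

From mathcomp Require Import all_boot all_order all_algebra.
From mathcomp Require Import zify.
Set Implicit Arguments. Unset Strict Implicit. Unset Printing Implicit Defensive.
Import Order.TTheory GRing.Theory Num.Theory.
Local Open Scope ring_scope.

Lemma count_in_add (P Q R : pred int) lo len :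
  (forall z, P z + Q z = R z :> nat)%N ->
  (count_in P lo len + count_in Q lo len = count_in R lo len)%N.
Proof.
move=> PQR; rewrite /count_in; elim: (iota 0 len) => [|k s IHs] //=.
by rewrite -PQR -IHs addnACA.
Qed.

Lemma count_in_predC (P : pred int) lo len :
  (count_in (fun z => ~~ P z) lo len + count_in P lo len)%N = len.
Proof.
rewrite (@count_in_add _ _ predT) => [|z]; last by case: (P z).
by rewrite /count_in count_predT size_iota.
Qed.

Lemma count_in_shift (P : pred int) lo c len :
  count_in (fun z => P (z + c)) lo len = count_in P (lo + c) len.
Proof. by apply: eq_count => k /=; rewrite addrAC. Qed.

Lemma count_in_cat (P : pred int) lo a b :
  count_in P lo (a + b)%N = (count_in P lo a + count_in P (lo + a%:Z) b)%N.
Proof.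
rewrite /count_in iotaD count_cat add0n.
have -> : iota a b = map (addn a) (iota 0 b) by rewrite -iotaDl addn0.
rewrite count_map.
by congr (_ + _)%N; apply: eq_count => k /=; rewrite PoszD addrA.
Qed.

Section ShiftClosed.

Variables (D : pred int) (p : nat).
Hypothesis D_shift : forall a, D a -> D (a + p%:Z).

Lemma count_in_cogen lo len :
  (count_in (is_cogen D p) lo len + count_in D lo len
   = count_in D (lo + p%:Z) len)%N.
Proof.
rewrite -count_in_shift; apply: count_in_add => z; rewrite /is_cogen.
by have := @D_shift z; case: (D z); case: (D (z + p%:Z)) => // /(_ isT).
Qed.

Lemma count_in_gen lo len :
  (count_in (is_gen D p) lo len + count_in D (lo - p%:Z) len
   = count_in D lo len)%N.
Proof.
have -> : count_in (is_gen D p) lo len = count_in (is_cogen D p) (lo - p%:Z) len.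
  apply: eq_count => k /=.
  by rewrite /is_gen /is_cogen andbC [lo - p%:Z + k]addrAC subrK.
by rewrite (count_in_cogen (lo - p%:Z)) subrK.
Qed.

End ShiftClosed.

Lemma semimodule_shift m n D :
  semimodule m n D ->
  (forall a, D a -> D (a + m%:Z)) /\ (forall a, D a -> D (a + n%:Z)).
Proof.
case=> _ D_Gamma; split=> a Da; apply: D_Gamma => //.
  by exists 1%N, 0%N; rewrite mul1n mul0n addn0.
by exists 0%N, 1%N; rewrite mul1n mul0n.
Qed.

Theorem mainTheorem13 (m n : nat) (D : pred int) (x : int) :
  (0 < m)%N -> (0 < n)%N -> coprime m n -> semimodule m n D ->
  [/\ (count_in (is_gen D m) x n)%:Z
        = (gfun n D (x - m%:Z))%:Z - (gfun n D x)%:Z,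
      (count_in (is_cogen D m) x n)%:Z
        = (gfun n D x)%:Z - (gfun n D (x + m%:Z))%:Z
    & count_in (is_gen D m) x n = count_in (is_cogen D n) (x - m%:Z) m].
Proof.
move=> _ _ _ /semimodule_shift [D_m D_n].
have gen_m := count_in_gen D_m x n.
have cogen_m := count_in_cogen D_m x n.
have cogen_n := count_in_cogen D_n (x - m%:Z) m.
have split_mn := count_in_cat D (x - m%:Z) m n.
have split_nm := count_in_cat D (x - m%:Z) n m.
rewrite subrK addnC in split_mn.
have g_left := count_in_predC D (x - m%:Z) n.
have g_mid := count_in_predC D x n.
have g_right := count_in_predC D (x + m%:Z) n.
rewrite /gfun; split; lia.
Qed.
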